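(* Let $\mathcal G_{yz}$ with arrival distribution $\beta$ be obtained from $(\mathcal G_x,\alpha)$ by decomposing the node $x$ into $y$ and $z$. Let $W_{yz}$ be the FCFS Markov chain of $(\mathcal G_{yz},\beta)$. For each state (word) $w$ of $W_{yz}$ let $\mathcal M(w)$ be the set of words obtained from $w$ by replacing each occurrence of $y$ or $z$ in $w$ independently by $y$ or $z$ (so $\mathcal M(w)=\{w\}$ if $w$ contains neither $y$ nor $z$). Then $W_{yz}$ is ordinarily lumpable with respect to the partition $\{\mathcal M(w)\}$ of its state space, and the lumped Markov chain, after identifying $\mathcal M(w)$ with the word obtained from $w$ by replacing every $y$ and $z$ by $x$, is the FCFS Markov chain $W_x$ of $(\mathcal G_x,\alpha)$.
   Context: A matching model consists of a finite connected simple graph and an arrival distribution on its nodes with positive entries; in each time step an item of class $i$ arrives with probability $\alpha_i$ (independently over time). Under FCFS, the state is the word of unmatched item classes in order of arrival (no two letters adjacent in the graph); an arriving item of class $i$ deletes the oldest letter of the word that is a neighbour of $i$, and if there is none $i$ is appended at the end. Decomposition: given $\mathcal G_x=(\mathcal V,\xi)$ with node $x$ and arrival distribution $\alpha$, $\mathcal G_{yz}$ has node set $(\mathcal V\setminus\{x\})\cup\{y,z\}$ with $y,z$ new nodes; edges among $\mathcal V\setminus\{x\}$ are as in $\mathcal G_x$, each of $y$ and $z$ is adjacent exactly to the neighbours of $x$ in $\mathcal G_x$ (so $y,z$ are not adjacent), and $\beta_y>0$, $\beta_z>0$, $\beta_y+\beta_z=\alpha_x$, $\beta_i=\alpha_i$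 for $i\ne x$. A Markov chain with transition matrix $P$ is ordinarily lumpable with respect to a partition $\{A_v\}$ of its state space if for every pair of blocks $A_u,A_v$, $\sum_{j\in A_v}P(w,j)$ is the same for all $w\in A_u$. *)

From mathcomp Require Import all_boot all_order all_algebra.
Set Implicit Arguments. Unset Strict Implicit. Unset Printing Implicit Defensive.
Import Order.TTheory GRing.Theory Num.Theory.
Local Open Scope ring_scope.

Definition word_ok (T : eqType) (e : rel T) (w : seq T) : bool :=
  all (fun a => all (fun b => ~~ e a b) w) w.

(* FCFS dynamics: an arriving item of class [i] deletes the oldest letter of [w]
   that is a neighbour of [i]; if there is none, [i] is appended at the end. *)
Definition fcfs_step (T : eqType) (e : rel T) (i : T) (w : seq T) : seq T :=
  let k := find (e i) w in
  if (k < size w)%N then take k w ++ drop k.+1 w else rcons w i.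

Definition fcfs_P (R : pzRingType) (T : finType) (e : rel T) (a : T -> R)
    (w w' : seq T) : R :=
  \sum_(i : T) a i * (fcfs_step e i w == w')%:R.

(* Ordinary lumpability w.r.t. a partition of the state space [St] whose block
   containing a state [u] is given by the finite (duplicate-free) list [blk u]. *)
Definition ordinarily_lumpable (R : pzRingType) (S : eqType) (St : pred S)
    (blk : S -> seq S) (P : S -> S -> R) : Prop :=
  forall u v w1 w2, St u -> St v -> w1 \in blk u -> w2 \in blk u ->
    \sum_(j <- blk v) P w1 j = \sum_(j <- blk v) P w2 j.

(* Decomposition of node [x]: the nodes of G_yz are [option V], with
   y := Some x, z := None, and Some v (v <> x) the old node v.
   [split_col x] collapses y and z back to x. *)
Definition split_col (V : Type) (x : V) (o : option V) : V :=
  if o is Some v then v else x.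

(* Edges of G_yz: as in G_x among old nodes; y and z adjacent exactly to the
   neighbours of x (in particular not to each other, e being irreflexive). *)
Definition split_rel (V : Type) (e : rel V) (x : V) : rel (option V) :=
  fun a b => e (split_col x a) (split_col x b).

Fixpoint Mlist (T : eqType) (y z : T) (w : seq T) : seq (seq T) :=
  match w with
  | [::] => [:: [::]]
  | a :: w' =>
      if (a == y) || (a == z) then
        [seq y :: t | t <- Mlist y z w'] ++ [seq z :: t | t <- Mlist y z w']
      else [seq a :: t | t <- Mlist y z w']
  end.

From mathcomp Require Import all_boot all_order all_algebra.
Set Implicit Arguments. Unset Strict Implicit. Unset Printing Implicit Defensive.
Import Order.TTheory GRing.Theory Num.Theory.
Local Open Scope ring_scope.

(* Write col for the map collapsing y and z back to x.  The graph
   G_yz is the pullback of G_x along col, so an arriving item of class i meets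
   exactly the same neighbours in w as an item of class col i meets in col w;
   hence FCFS commutes with col: col (step i w) = step (col i) (col w), and a
   word is admissible in G_yz iff its collapse is admissible in G_x.  The block
   M(w) is exactly the fibre of col through w and is listed without repetition,
   so summing the transition probabilities out of w over the block M(v) counts
   the arrivals i with col (step i w) = col v.  Grouping the arrivals by col i,
   the rates beta y + beta z = alpha x recombine into alpha, giving the FCFS
   transition probability of G_x from col w = col u to col v.  This value does
   not depend on the representative w of M(u), which is ordinary lumpability. *)

Lemma fcfs_step_map (S T : eqType) (e : rel T) (f : S -> T) (i : S) (w : seq S) :
  map f (fcfs_step (fun a b => e (f a) (f b)) i w) = fcfs_step e (f i) (map f w).
Proof.
rewrite /fcfs_step find_map size_map.
case: ifP => _; first by rewrite map_cat map_take map_drop.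
by rewrite map_rcons.
Qed.

Lemma word_ok_map (S T : eqType) (e : rel T) (f : S -> T) (w : seq S) :
  word_ok (fun a b => e (f a) (f b)) w = word_ok e (map f w).
Proof.
rewrite /word_ok all_map; apply: eq_all => a /=.
by rewrite all_map; apply: eq_all.
Qed.

Lemma mem_cons_map (T : eqType) (c b : T) (t : seq T) (L : seq (seq T)) :
  (b :: t \in [seq c :: s | s <- L]) = (b == c) && (t \in L).
Proof.
apply/mapP/andP => [[s sL [-> ->]]|[/eqP -> tL]]; first by split.
by exists t.
Qed.

Lemma nil_notin_cons_map (T : eqType) (c : T) (L : seq (seq T)) :
  ([::] \in [seq c :: s | s <- L]) = false.
Proof. by apply/mapP => -[]. Qed.

Lemma split_col_eq (V : eqType) (x : V) (a b : option V) :
  (split_col x b == split_col x a) =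
  if (a == Some x) || (a == None) then (b == Some x) || (b == None) else b == a.
Proof.
have col_x c : (split_col x c == x) = (c == Some x) || (c == None).
  by case: c => [v|]; rewrite ?eqxx // orbF (inj_eq (@Some_inj _)).
case: ifP => [/orP aYZ | /negbT].
  have -> : split_col x a = x by apply/eqP; rewrite col_x; apply/orP.
  exact: col_x.
case: a => [v|] //; rewrite orbF (inj_eq (@Some_inj _)) => nvx.
case: b => [v'|] /=; first by rewrite (inj_eq (@Some_inj _)).
by rewrite eq_sym (negbTE nvx).
Qed.

Lemma Mlist_mem (V : eqType) (x : V) (u u' : seq (option V)) :
  (u' \in Mlist (Some x) None u) =
  (map (split_col x) u' == map (split_col x) u).
Proof.
elim: u u' => [|a w IH] [|b t] /=; rewrite ?mem_seq1 //.
  by case: ifP => _; rewrite ?mem_cat !nil_notin_cons_map.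
rewrite eqseq_cons split_col_eq -IH.
case: ifP => _; last by rewrite mem_cons_map.
by rewrite mem_cat !mem_cons_map -andb_orl.
Qed.

Lemma Mlist_uniq (T : eqType) (y z : T) (u : seq T) :
  y != z -> uniq (Mlist y z u).
Proof.
move=> yz; have cons_inj c : injective (fun s : seq T => c :: s) by move=> ? ? [].
elim: u => [|a w IH] //=; case: ifP => _; last by rewrite map_inj_uniq.
rewrite cat_uniq !map_inj_uniq ?IH //= andbT.
apply/hasPn => s /mapP [t _ ->]; apply/mapP => -[t' _ [eyz _]].
by move: yz; rewrite eyz eqxx.
Qed.

Lemma sum_indicator_uniq (R : pzSemiRingType) (T : eqType) (s : T) (L : seq T) :
  uniq L -> \sum_(j <- L) ((s == j)%:R : R) = (s \in L)%:R.
Proof.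
elim: L => [|a L IH] /=; first by rewrite big_nil.
move=> /andP [aL uL]; rewrite big_cons IH // in_cons.
case: (eqVneq s a) => [->|] /=; last by rewrite add0r.
by rewrite (negbTE aL) addr0.
Qed.

Lemma sum_option (R : nmodType) (V : finType) (f : option V -> R) :
  \sum_(i : option V) f i = f None + \sum_(v : V) f (Some v).
Proof.
rewrite (bigD1 None) //=; congr (_ + _).
rewrite (@reindex_omap _ _ _ _ _ (fun v : V => Some v) (fun o => o)) /=.
  by apply: eq_bigl => v; rewrite eqxx.
by case.
Qed.

Lemma sum_split_rates (R : pzRingType) (V : finType) (x : V)
    (alpha : V -> R) (beta : option V -> R) (F : V -> R) :
  beta (Some x) + beta None = alpha x ->
  (forall v, v != x -> beta (Some v) = alpha v) ->
  \sum_(i : option V) beta i * F (split_col x i) = \sum_(v : V) alpha v * F v.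
Proof.
move=> rate_x rate_v; rewrite sum_option (bigD1 x) // [RHS](bigD1 x) //=.
rewrite addrA -mulrDl [beta None + _]addrC rate_x; congr (_ + _).
by apply: eq_bigr => v vx; rewrite rate_v.
Qed.

Lemma lumped_transition (R : pzRingType) (V : finType) (e : rel V) (x : V)
    (alpha : V -> R) (beta : option V -> R) (u v w : seq (option V)) :
  beta (Some x) + beta None = alpha x ->
  (forall v, v != x -> beta (Some v) = alpha v) ->
  w \in Mlist (Some x) None u ->
  \sum_(j <- Mlist (Some x) None v) fcfs_P (split_rel e x) beta w j =
  fcfs_P e alpha (map (split_col x) u) (map (split_col x) v).
Proof.
move=> rate_x rate_v; rewrite Mlist_mem => /eqP col_w.
rewrite /fcfs_P exchange_big /= -col_w -(sum_split_rates _ rate_x rate_v).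
apply: eq_bigr => i _.
by rewrite -mulr_sumr sum_indicator_uniq ?Mlist_uniq // Mlist_mem fcfs_step_map.
Qed.

Theorem mainTheorem11 (R : realFieldType) (V : finType) (e : rel V) (x : V)
    (alpha : V -> R) (beta : option V -> R) :
  symmetric e -> irreflexive e -> (forall a b, connect e a b) ->
  (forall v, 0 < alpha v) -> \sum_(v : V) alpha v = 1 ->
  0 < beta (Some x) -> 0 < beta None -> beta (Some x) + beta None = alpha x ->
  (forall v, v != x -> beta (Some v) = alpha v) ->
  let eyz := split_rel e x in
  let col := split_col x in
  let M := Mlist (Some x) None in
  [/\ ordinarily_lumpable (word_ok eyz) M (fcfs_P eyz beta),
      (forall u, word_ok eyz u -> word_ok e (map col u)),
      (forall w', word_ok e w' -> exists2 u, word_ok eyz u & map col u = w'),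
      (forall u u', word_ok eyz u -> word_ok eyz u' ->
         (map col u == map col u') = (u' \in M u))
    & (forall u v w, word_ok eyz u -> word_ok eyz v -> w \in M u ->
         \sum_(j <- M v) fcfs_P eyz beta w j
         = fcfs_P e alpha (map col u) (map col v))].
Proof.
move=> _ _ _ _ _ _ _ rate_x rate_v eyz col M.
have lumped u v w := @lumped_transition R V e x alpha beta u v w rate_x rate_v.
split.
- by move=> u v w1 w2 _ _ w1u w2u; rewrite (lumped u v w1) // (lumped u v w2).
- by move=> u; rewrite word_ok_map.
- move=> w' ok; exists (map Some w'); last by rewrite -map_comp map_id.
  by rewrite word_ok_map -map_comp map_id.
- by move=> u u' _ _; rewrite Mlist_mem eq_sym.
- by move=> u v w _ _; apply: lumped.
Qed.
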